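(* Let $q\ge2$ and let $D$ be a directed graph on $n$ vertices with an induced acyclic subgraph on $I$ vertices. If $D$ is $q$-solvable, then $n \ge I + q\left(1-\frac1q\right)^{I}$.
   Context: A directed graph $D=(V,E)$ has arcs $E \subseteq \{(u,v)\in V^2 : u \neq v\}$ (bidirectional pairs allowed). An induced subgraph is acyclic if it contains no directed cycle. $N^-(v)=\{u:(u,v)\in E\}$. For $q\ge2$ let $[q]=\{0,\dots,q-1\}$. A $D$-function over $[q]$ is a map $f=(f_v)_{v\in V}:[q]^V\to[q]^V$ with each $f_v(x)$ depending only on $(x_u)_{u\in N^-(v)}$. $D$ is $q$-solvable if some $D$-function $f$ over $[q]$ has the property that for every $x\in[q]^V$ there is $v$ with $f_v(x)=x_v$. *)

From HB Require Import structures.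
From mathcomp Require Import all_boot all_order all_algebra.
Set Implicit Arguments. Unset Strict Implicit. Unset Printing Implicit Defensive.

(* A directed graph D = (V, E): V a finite type, E : rel V the arc relation
   ((u,v) is an arc iff E u v). Loops are excluded by a separate hypothesis. *)

Definition has_dicycle_in (V : finType) (E : rel V) (S : {set V}) : Prop :=
  exists c : seq V, [/\ c != [::], uniq c, all (fun v => v \in S) c & cycle E c].

Definition induced_acyclic (V : finType) (E : rel V) (S : {set V}) : Prop :=
  ~ has_dicycle_in E S.

Definition is_D_function (V : finType) (E : rel V) (q : nat)
  (f : (V -> 'I_q) -> V -> 'I_q) : Prop :=
  forall (v : V) (x y : V -> 'I_q),
    (forall u, E u v -> x u = y u) -> f x v = f y v.

Definition q_solvable (V : finType) (E : rel V) (q : nat) : Prop :=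
  exists f : (V -> 'I_q) -> V -> 'I_q,
    is_D_function E f /\ forall x : V -> 'I_q, exists v : V, f x v = x v.

From HB Require Import structures.
From mathcomp Require Import all_boot all_order all_algebra.
From mathcomp Require Import zify ring.
Import Order.TTheory GRing.Theory Num.Theory.
Set Implicit Arguments. Unset Strict Implicit. Unset Printing Implicit Defensive.

(* Let S be a set of I vertices inducing an acyclic subgraph and f a solving
   D-function over [q].  Call a configuration x in [q]^V "unfixed on S" when
   f_v(x) <> x_v for every v in S.
   - Counting: for a fixed vertex s, if a set P of configurations and a map g
     do not look at coordinate s, then exactly a 1/q fraction of P satisfies
     g x = x_s.  Peeling off a sink s of S (its local function f_s does not read
     coordinate s, nor do the f_v, v in S \ s) gives by induction
        #(unfixed on S) = q^n ((q-1)/q)^I.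
   - Covering: as f is solving, every configuration unfixed on S is fixed at
     some v outside S, and each set {x | f_v x = x_v} has q^(n-1) elements, so
        #(unfixed on S) <= (n - I) q^(n-1).
   Comparing both gives q (1 - 1/q)^I <= n - I, which is the theorem. *)

Section Coordinate.
Variables (q : nat) (V : finType) (s : V).

Definition blind_at (T : Type) (h : {ffun V -> 'I_q} -> T) : Prop :=
  forall x y : {ffun V -> 'I_q}, (forall u, u != s -> x u = y u) -> h x = h y.

Definition reset (y : {ffun V -> 'I_q}) (k : 'I_q) : {ffun V -> 'I_q} :=
  [ffun u => if u == s then k else y u].

Lemma reset_at y k : reset y k s = k.
Proof. by rewrite ffunE eqxx. Qed.

Lemma reset_off y k u : u != s -> reset y k u = y u.
Proof. by move=> /negbTE us; rewrite ffunE us. Qed.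

Variables (P : {set {ffun V -> 'I_q}}) (g : {ffun V -> 'I_q} -> 'I_q).
Hypotheses (P_blind : blind_at (fun x => x \in P)) (g_blind : blind_at g).

(* If P and g ignore coordinate s, then (y, k) |-> reset y k maps
   {y in P | g y = y_s} x [q] bijectively onto P. *)
Lemma card_fixed_coord : #|[set x in P | g x == x s]| * q = #|P|.
Proof.
set Q := [set x in P | g x == x s].
have reset_inj : {in setX Q [set: 'I_q] &, injective (fun yk => reset yk.1 yk.2)}.
  move=> [y k] [y' k'] /setXP[Qy _] /setXP[Qy' _] /= eq_reset.
  have eq_k : k = k' by rewrite -(reset_at y k) -(reset_at y' k') eq_reset.
  subst k'.
  congr (_, _); apply/ffunP => u; case: (eqVneq u s) => [->|us]; last first.
    by rewrite -(reset_off y k us) -(reset_off y' k us) eq_reset.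
  move: Qy Qy'; rewrite !inE => /andP[_ /eqP <-] /andP[_ /eqP <-].
  apply: g_blind => w ws.
  by rewrite -(reset_off y k ws) -(reset_off y' k ws) eq_reset.
have reset_onto : [set reset yk.1 yk.2 | yk in setX Q [set: 'I_q]] = P.
  apply/setP => x; apply/imsetP/idP => [|Px].
    move=> [[y k]] /setXP[] /[!inE] /andP[Py _] _ ->.
    by rewrite (P_blind (y := y)) // => u us; rewrite reset_off.
  exists (reset x (g x), x s); last first.
    by apply/ffunP => u; case: (eqVneq u s) => [->|us]; rewrite ?reset_at ?reset_off.
  rewrite !inE /= andbT reset_at (P_blind (y := x)) ?Px /=; last first.
    by move=> u us; rewrite reset_off.
  by rewrite (g_blind (y := x)) // => u us; rewrite reset_off.
by rewrite -reset_onto card_in_imset // cardsX cardsT card_ord.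
Qed.

Lemma card_moved_coord : #|[set x in P | g x != x s]| * q = #|P| * (q - 1).
Proof.
have := cardsID [set x | g x == x s] P.
have -> : P :&: [set x | g x == x s] = [set x in P | g x == x s].
  by apply/setP => x; rewrite !inE.
have -> : P :\: [set x | g x == x s] = [set x in P | g x != x s].
  by apply/setP => x; rewrite !inE andbC.
move=> split; have fixed := card_fixed_coord.
by rewrite mulnBr muln1 -{1}split mulnDl -fixed addKn.
Qed.

End Coordinate.

Section Acyclic.
Variables (V : finType) (E : rel V).

Lemma induced_acyclic_sub (S S' : {set V}) :
  S' \subset S -> induced_acyclic E S -> induced_acyclic E S'.
Proof.
move=> /subsetP sub_S'S acyc_S [c [c_nil c_uniq c_S' c_cyc]]; apply: acyc_S.
by exists c; split=> //; apply: sub_all c_S' => v /sub_S'S.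
Qed.

Lemma successor_dicycle (S : {set V}) (h : V -> V) (v0 : V) :
  v0 \in S -> (forall v, v \in S -> (h v \in S) && E v (h v)) ->
  has_dicycle_in E S.
Proof.
move=> S_v0 h_succ.
have iter_S n : iter n h v0 \in S.
  by elim: n => //= n IH; case/andP: (h_succ _ IH).
have [i i_lt iter_loop] := trajectP (looping_order h v0).
pose y := iter i h v0.
have y_cycle : fcycle h (orbit h y).
  apply/(orbitPcycle 0 3); exists (order h v0 - i - 1).
  by rewrite /y -iterD (_ : _ + i = order h v0) //; lia.
have orbit_S : all (fun v => v \in S) (orbit h y).
  by apply/allP => z /trajectP[j _ ->]; rewrite /y -iterD.
exists (orbit h y); split.
- by apply/eqP => orb_nil; have := in_orbit h y; rewrite orb_nil.
- exact: orbit_uniq.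
- exact: orbit_S.
- apply: (sub_in_cycle _ orbit_S y_cycle) => a b /h_succ/andP[_ E_ab] _ /eqP <-.
  exact: E_ab.
Qed.

Lemma acyclic_sink (S : {set V}) :
  S != set0 -> induced_acyclic E S ->
  exists2 s, s \in S & {in S, forall w, ~~ E s w}.
Proof.
move=> /set0Pn[v0 S_v0] acyc_S.
have [/exists_inP[s S_s /forall_inP sink_s]|no_sink] :=
  boolP [exists s in S, [forall w in S, ~~ E s w]]; first by exists s.
pose h v := odflt v [pick w | (w \in S) && E v w].
apply: False_ind (acyc_S (successor_dicycle S_v0 (h := h) _)) => v S_v.
rewrite /h; case: pickP => [w //|no_succ]; case/negP: no_sink.
apply/exists_inP; exists v => //; apply/forall_inP => w S_w.
by have := no_succ w; rewrite S_w /= => ->.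
Qed.

End Acyclic.

Lemma card_bigcup_le (T I : finType) (D : {pred I}) (B : I -> {set T}) :
  #|\bigcup_(i in D) B i| <= \sum_(i in D) #|B i|.
Proof.
elim/big_rec2: _ => [|i n m _ le_nm]; first by rewrite cards0.
by rewrite (leq_trans (leq_card_setU _ _).1) // leq_add2l.
Qed.

Section Solvable.
Variables (q : nat) (V : finType) (E : rel V) (f : (V -> 'I_q) -> V -> 'I_q).
Hypotheses (E_irr : irreflexive E) (f_local : is_D_function E f).

Definition fixed_at (v : V) : {set {ffun V -> 'I_q}} :=
  [set x : {ffun V -> 'I_q} | f x v == x v].

Definition unfixed_on (S : {set V}) : {set {ffun V -> 'I_q}} :=
  [set x : {ffun V -> 'I_q} | [forall v in S, f x v != x v]].

Lemma local_blind (s v : V) :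
  ~~ E s v -> blind_at s (fun x : {ffun V -> 'I_q} => f x v).
Proof.
move=> not_E_sv x y eq_off; apply: f_local => u E_uv; apply: eq_off.
by apply: contraNneq not_E_sv => <-.
Qed.

(* Since E is loopless, f_v ignores x_v: a 1/q fraction of all configurations is
   fixed at v. *)
Lemma card_fixed_at (v : V) : #|fixed_at v| * q = q ^ #|V|.
Proof.
have setT_blind : blind_at v (fun x : {ffun V -> 'I_q} => x \in setT).
  by move=> x y _; rewrite !inE.
have := card_fixed_coord setT_blind (local_blind (negbT (E_irr v))).
rewrite cardsT card_ffun card_ord => <-.
by congr (_ * q); apply: eq_card => x; rewrite !inE.
Qed.

Lemma unfixed_on_blind (s : V) (S : {set V}) :
  s \notin S -> {in S, forall w, ~~ E s w} ->
  blind_at s (fun x : {ffun V -> 'I_q} => x \in unfixed_on S).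
Proof.
move=> S'_s no_arc x y eq_off; rewrite !inE; apply: eq_forallb_in => v S_v.
have v_s : v != s by apply: contraNneq S'_s => <-.
by rewrite eq_off // (local_blind (no_arc v S_v) eq_off).
Qed.

Lemma unfixed_on_setD1 (s : V) (S : {set V}) : s \in S ->
  unfixed_on S = [set x in unfixed_on (S :\ s) | f x s != x s].
Proof.
move=> S_s; apply/setP => x; rewrite !inE; apply/forall_inP/andP => [unfixed|[]].
  by split; [apply/forall_inP => v /setD1P[_ /unfixed] | apply: unfixed].
move=> /forall_inP unfixed unfixed_s v S_v; case: (eqVneq v s) => [-> //|v_s].
by apply: unfixed; rewrite in_setD1 v_s.
Qed.

(* Exact count: q^|S| #(unfixed on S) = q^n (q-1)^|S| for acyclic S,
   by removing a sink of S at each step. *)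
Lemma card_unfixed_on (k : nat) (S : {set V}) :
  #|S| = k -> induced_acyclic E S ->
  #|unfixed_on S| * q ^ k = q ^ #|V| * (q - 1) ^ k.
Proof.
elim: k S => [|k IH] S card_S acyc_S.
  rewrite (cards0_eq card_S) !muln1 -[in RHS](card_ord q) -card_ffun -cardsT.
  by apply: eq_card => x; rewrite !inE; apply/forall_inP => v; rewrite inE.
have [s S_s sink_s] : exists2 s, s \in S & {in S, forall w, ~~ E s w}.
  by apply: acyclic_sink acyc_S; rewrite -card_gt0 card_S.
have card_S' : #|S :\ s| = k by move: card_S; rewrite (cardsD1 s) S_s => -[].
have acyc_S' := induced_acyclic_sub (subD1set S s) acyc_S.
have blind_S' : blind_at s (fun x : {ffun V -> 'I_q} => x \in unfixed_on (S :\ s)).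
  by apply: unfixed_on_blind => [|w /setD1P[_ /sink_s]//]; rewrite !inE eqxx.
have card_step := card_moved_coord blind_S' (local_blind (negbT (E_irr s))).
rewrite (unfixed_on_setD1 S_s) expnS mulnA card_step -mulnA mulnCA IH //.
by rewrite mulnCA -expnS.
Qed.

Lemma solving_cover (S : {set V}) :
  (forall x : V -> 'I_q, exists v, f x v = x v) ->
  unfixed_on S \subset \bigcup_(v in ~: S) fixed_at v.
Proof.
move=> solving; apply/subsetP => x /[!inE] /forall_inP unfixed.
have [v fixed_v] := solving x; apply/bigcupP; exists v; last by rewrite inE fixed_v.
by rewrite inE; apply/negP => S_v; have := unfixed v S_v; rewrite fixed_v eqxx.
Qed.

Lemma card_unfixed_le (S : {set V}) :
  (forall x : V -> 'I_q, exists v, f x v = x v) ->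
  #|unfixed_on S| * q <= #|~: S| * q ^ #|V|.
Proof.
move=> solving.
have fixed_total : \sum_(v in ~: S) #|fixed_at v| * q = #|~: S| * q ^ #|V|.
  by rewrite (eq_bigr _ (fun v _ => card_fixed_at v)) sum_nat_const.
rewrite -fixed_total -big_distrl leq_mul2r /=; apply/orP; right.
exact: leq_trans (subset_leq_card (solving_cover S solving)) (card_bigcup_le _ _).
Qed.

Lemma solvable_acyclic_bound (S : {set V}) : 0 < q -> induced_acyclic E S ->
  (forall x : V -> 'I_q, exists v, f x v = x v) ->
  q * (q - 1) ^ #|S| <= #|~: S| * q ^ #|S|.
Proof.
move=> q_gt0 acyc_S solving.
have count := card_unfixed_on (erefl #|S|) acyc_S.
have bound := card_unfixed_le S solving.
rewrite -(@leq_pmul2l (q ^ #|V|)) ?expn_gt0 ?q_gt0 // mulnCA -count.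
by rewrite !mulnA leq_mul2r (mulnC q) (mulnC (q ^ #|V|)) bound orbT.
Qed.

End Solvable.

Lemma ratio_bound (R : numFieldType) (q I m : nat) : 0 < q ->
  q * (q - 1) ^ I <= m * q ^ I -> (q%:R * (1 - q%:R^-1) ^+ I <= (m%:R : R))%R.
Proof.
move=> q_gt0 le_qm; have q_neq0 : ((q%:R : R) != 0)%R by rewrite pnatr_eq0 -lt0n.
have -> : (1 - q%:R^-1 : R)%R = ((q - 1)%:R / q%:R)%R by rewrite natrB //; field.
rewrite expr_div_n mulrA ler_pdivrMr ?exprn_gt0 ?ltr0n //.
by rewrite -!natrX -!natrM ler_nat.
Qed.

Theorem corollary14 (q : nat) (V : finType) (E : rel V) (I : nat) :
  (2 <= q)%N ->
  irreflexive E ->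
  (exists S : {set V}, #|S| = I /\ induced_acyclic E S) ->
  q_solvable E q ->
  (I%:R + q%:R * (1 - q%:R^-1) ^+ I <= (#|V|%:R : rat))%R.
Proof.
move=> q_ge2 E_irr [S [<- acyc_S]] [f [f_local solving]].
have q_gt0 : 0 < q by apply: leq_trans q_ge2.
rewrite -(cardsC S) natrD lerD2l; apply: (ratio_bound _ q_gt0).
exact: solvable_acyclic_bound E_irr f_local S q_gt0 acyc_S solving.
Qed.
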